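(* Let $G$ be a connected threshold graph of order $n \ge 4$ and size $m$ with $n-1 < m < \binom{n}{2}$, with generating sequence $a_1a_2\cdots a_n$, $c$ type 1 vertices, $z$ type 0 vertices, backwards zero position sequence $(b_1,\ldots,b_z)$, and numbers $F_p$ ($p\in\mathbb{N}_0$) and $\mathrm{LW}_k$ ($k \in \mathbb{N}_0$) as defined in the context. Then the sequence $(\mathrm{LW}_k)_{k\in\mathbb{N}_0}$ satisfies \[ \mathrm{LW}_0 = 1, \qquad \mathrm{LW}_k = c\,\mathrm{LW}_{k-1} + \sum_{r=0}^{k-3} \mathrm{LW}_r \sum_{q\in\mathbb{N}_0} \binom{k-3-r-q}{q} F_{q+1} \qquad (k\in\mathbb{N}). \]
   Context: A threshold graph is a simple graph whose vertices can be ordered $v_1,\ldots,v_n$ so that for each $2\le i\le n$, $v_i$ is either adjacent to all of $v_1,\ldots,v_{i-1}$ (then $a_i=1$) or to none of them (then $a_i=0$); $a_1a_2\cdots a_n$ is the generating sequence, where by convention $a_1=1$. Vertex $v_i$ is of type 1 if $a_i=1$ and of type 0 if $a_i=0$; $c$ and $z$ denote the numbers of type 1 and type 0 vertices, so $c+z=n$ (here $c\ge 3$, $z \ge 1$). The backwards zero position sequence $(b_1,\ldots,b_z)$ is defined by letting $b_i$ be the number of type 1 vertices appearing after the $i$-th type 0 vertex in the order $v_1,\ldots,v_n$. A lazy walk of length $k\in\mathbb{N}_0$ is a sequence $u_0u_1\cdots u_k$ of vertices such that for each $1\le i\le k$, $u_i=u_{i-1}$ or $u_i$ is adjacent to $u_{i-1}$.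 For $k\in\mathbb{N}$, $\mathrm{LW}_k$ is the number of lazy walks of length $k-1$ in $G$ whose first and last vertices are both type 1 vertices, and $\mathrm{LW}_0=1$. Define $F_0=c$ and, for $p\ge 1$, \[F_p=\sum_{i_1,\ldots,i_p=1}^{z} b_{i_1}\min\{b_{i_1},b_{i_2}\}\min\{b_{i_2},b_{i_3}\}\cdots\min\{b_{i_{p-1}},b_{i_p}\}\,b_{i_p}\] (so $F_1=\sum_{i=1}^z b_i^2$). Binomial coefficients $\binom{a}{q}$ with integer $a$ and $q\in\mathbb{N}_0$ are taken to be $0$ whenever $a<q$. *)

From mathcomp Require Import all_boot all_order.
Set Implicit Arguments. Unset Strict Implicit. Unset Printing Implicit Defensive.

(* A threshold graph of order n is given by its generating sequence
   a_1 ... a_n, encoded as a : 'I_n -> bool (vertex v_{i+1} is the ordinal i).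
   The value a at index 0 is ignored: by convention a_1 = 1. *)

Definition type1 (n : nat) (a : 'I_n -> bool) (i : 'I_n) : bool :=
  (val i == 0) || a i.

Definition tadj (n : nat) (a : 'I_n -> bool) : rel 'I_n :=
  fun i j => (i != j) && (if (val i < val j)%N then a j else a i).

Definition tconnected (n : nat) (a : 'I_n -> bool) : Prop :=
  forall i j : 'I_n, connect (tadj a) i j.

Definition thr_size (n : nat) (a : 'I_n -> bool) : nat :=
  #|[set p : 'I_n * 'I_n | (val p.1 < val p.2)%N && tadj a p.1 p.2]|.

Definition thr_c (n : nat) (a : 'I_n -> bool) : nat := #|[set i | type1 a i]|.

Definition bseq (n : nat) (a : 'I_n -> bool) : seq nat :=
  [seq #|[set j | type1 a j & (val i < val j)%N]| | i <- enum 'I_n & ~~ type1 a i].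

Definition thr_z (n : nat) (a : 'I_n -> bool) : nat := size (bseq a).

Definition thr_F (n : nat) (a : 'I_n -> bool) (p : nat) : nat :=
  match p with
  | 0 => thr_c a
  | p'.+1 =>
      let b := bseq a in
      \sum_(t : {ffun 'I_p'.+1 -> 'I_(thr_z a)})
        nth 0 b (t ord0)
        * (\prod_(k < p') minn (nth 0 b (t (inord k))) (nth 0 b (t (inord k.+1))))
        * nth 0 b (t ord_max)
  end.

(* lazy walks u_0 ... u_{L} encoded as w : {ffun 'I_L.+1 -> 'I_n} *)
Definition lazy_walk (n L : nat) (a : 'I_n -> bool) (w : {ffun 'I_L.+1 -> 'I_n}) : bool :=
  [forall i : 'I_L, (w (inord i.+1) == w (inord i)) || tadj a (w (inord i)) (w (inord i.+1))].

Definition LW (n : nat) (a : 'I_n -> bool) (k : nat) : nat :=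
  match k with
  | 0 => 1
  | L.+1 => #|[set w : {ffun 'I_L.+1 -> 'I_n} |
                 [&& lazy_walk a w, type1 a (w ord0) & type1 a (w ord_max)]]|
  end.

From Pilot Require Import Defs.
From mathcomp Require Import all_boot all_order zify.
Set Implicit Arguments. Unset Strict Implicit. Unset Printing Implicit Defensive.

(* Let S = I + A be the lazy adjacency matrix and k the indicator of the type-1
   vertices, so that LW_{L+1} = k^T S^L k.  The type-1 vertices form a clique, hence
   S = N + k k^T where N forbids steps between two type-1 vertices, and expanding S^L
   along the rank-one part gives the renewal identity LW_{L+1} = sum_r LW_r E_{L-r}
   with E_j = k^T N^j k.  The type-1 neighbours of a type-0 vertex z are the type-1
   vertices after z, so two type-0 vertices z, z' have min(b_z, b_z') common type-1
   neighbours.  Consequently y_m = N^m k, restricted to type-0 vertices, satisfies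
   y_1 = b and y_{m+2} = y_{m+1} + M y_m with M_{zz'} = min(b_z, b_z'), which is
   solved by y_{m+1} = sum_q C(m-q, q) M^q b.  Pairing with b gives
   E_{m+2} = sum_q C(m-q, q) F_{q+1}, while E_0 = c and E_1 = 0. *)

Lemma sum_diag_binomS m (c : nat -> nat) :
  \sum_(q < m.+3) 'C(m.+2 - q, q) * c q =
  \sum_(q < m.+2) 'C(m.+1 - q, q) * c q + \sum_(q < m.+1) 'C(m - q, q) * c q.+1.
Proof.
rewrite big_ord_recl [X in _ = X + _]big_ord_recl !subn0 !bin0 -addnA; congr (_ + _).
rewrite big_ord_recr /= subnn bin0n mul0n addn0 -big_split; apply: eq_bigr => i _ /=.
by rewrite subSS subSn 1?binS 1?mulnDl // -ltnS.
Qed.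

Lemma sum_diag_binom_widen (c : nat -> nat) B A : B < A ->
  \sum_(q < B.+1) 'C(B - q, q) * c q = \sum_(q < A) 'C(B - q, q) * c q.
Proof.
move=> lt_BA; rewrite -!(big_mkord xpredT (fun q => 'C(B - q, q) * c q)).
rewrite (big_cat_nat (leq0n _) lt_BA) /= [X in _ = _ + X]big_nat_cond.
rewrite [X in _ = _ + X]big1 ?addn0 // => q /andP[/andP[lt_Bq _] _].
by rewrite (eqP (ltnW lt_Bq)) bin0n (gtn_eqF (leq_ltn_trans (leq0n B) lt_Bq)).
Qed.

Section WalkSums.
Variable T : finType.

Fixpoint walk_sum (g : T -> T -> nat) (L : nat) (h : T -> nat) (u : T) : nat :=
  if L is L'.+1 then \sum_v g u v * walk_sum g L' h v else h u.

Definition ffun_cons L (x : T) (w : {ffun 'I_L.+1 -> T}) : {ffun 'I_L.+2 -> T} :=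
  [ffun i : 'I_L.+2 => if val i is j.+1 then w (inord j) else x].

Lemma big_ffun_cons L (F : {ffun 'I_L.+2 -> T} -> nat) :
  \sum_(w : {ffun 'I_L.+2 -> T}) F w =
  \sum_(x : T) \sum_(w : {ffun 'I_L.+1 -> T}) F (ffun_cons x w).
Proof.
rewrite pair_bigA /= (reindex (fun p => ffun_cons p.1 p.2)) //=.
exists (fun w => (w ord0, [ffun j : 'I_L.+1 => w (inord j.+1)])).
  move=> [x w] _; congr pair; first by rewrite ffunE.
  apply/ffunP=> j; by rewrite !ffunE /= inordK ?inord_val // ltnS.
move=> w _; apply/ffunP=> -[[|j] lt_j]; rewrite !ffunE /=; first exact/congr1/val_inj.
by rewrite ffunE; congr (w _); apply/val_inj; rewrite /= !inordK.
Qed.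

Lemma ffun_cons0 L x (w : {ffun 'I_L.+1 -> T}) : ffun_cons x w ord0 = x.
Proof. by rewrite ffunE. Qed.

Lemma ffun_cons_max L x (w : {ffun 'I_L.+1 -> T}) : ffun_cons x w ord_max = w ord_max.
Proof. by rewrite ffunE /= (inord_val ord_max). Qed.

Lemma ffun_consE L x (w : {ffun 'I_L.+1 -> T}) i :
  i < L.+1 -> ffun_cons x w (inord i.+1) = w (inord i).
Proof. by move=> lt_iL; rewrite ffunE /= inordK. Qed.

Lemma walk_sumE (g : T -> T -> nat) (h f : T -> nat) L :
  \sum_(w : {ffun 'I_L.+1 -> T})
     f (w ord0) * (\prod_(i < L) g (w (inord i)) (w (inord i.+1))) * h (w ord_max)
  = \sum_u f u * walk_sum g L h u.
Proof.
elim: L f => [|L IHL] f.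
  rewrite (reindex (fun u => [ffun=> u])) /=.
    by apply: eq_bigr => u _; rewrite big_ord0 muln1 !ffunE.
  exists (fun w : {ffun 'I_1 -> T} => w ord0) => [u _|w _]; first by rewrite ffunE.
  by apply/ffunP => i; rewrite ffunE ord1.
rewrite big_ffun_cons; apply: eq_bigr => x _.
rewrite /= -IHL big_distrr; apply: eq_bigr => w _.
rewrite big_ord_recl ffun_cons0 ffun_cons_max (inord_val ord0) ffun_cons0.
rewrite ffun_consE // inord_val -!mulnA /=; congr (_ * (_ * (_ * _))).
apply: eq_bigr => i _; have lt_iL := ltn_ord i.
by rewrite /bump /= add1n !ffun_consE //; lia.
Qed.

Section RankOneSplitting.
Variables (g g' : T -> T -> nat) (k l : T -> nat).
Hypothesis g_split : forall u v, g u v = g' u v + k u * l v.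

Lemma walk_sum_rank1 m h u :
  walk_sum g m h u = walk_sum g' m h u
  + \sum_(i < m) (\sum_w l w * walk_sum g i h w) * walk_sum g' (m - i.+1) k u.
Proof.
elim: m u => [|m IHm] u; first by rewrite big_ord0 addn0.
have -> : walk_sum g m.+1 h u =
    \sum_v g' u v * walk_sum g m h v + k u * \sum_v l v * walk_sum g m h v.
  rewrite /= big_distrr -big_split; apply: eq_bigr => v _.
  by rewrite g_split mulnDl /= mulnA.
under eq_bigr do rewrite IHm mulnDr.
rewrite big_split -addnA big_ord_recr /= subnn mulnC; congr (_ + (_ + _)).
under eq_bigr do rewrite big_distrr.
rewrite exchange_big; apply: eq_bigr => i _.
rewrite subSS -[m - i]subnSK ?ltn_ord //= big_distrr.
by apply: eq_bigr => v _; rewrite mulnCA.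
Qed.

End RankOneSplitting.

Section DiagonalBinomialRecurrence.
Variables (G : T -> T -> nat) (x : T -> nat) (y : nat -> T -> nat).
Hypotheses (y0 : forall z, y 0 z = 0) (y1 : forall z, y 1 z = x z).
Hypothesis yS : forall m z, y m.+2 z = y m.+1 z + \sum_z' G z z' * y m z'.

Lemma diag_binom_solution m z :
  y m.+1 z = \sum_(q < m.+1) 'C(m - q, q) * walk_sum G q x z.
Proof.
elim/ltn_ind: m z => -[|[|m]] IHm z.
- by rewrite y1 big_ord1 /= mul1n.
- rewrite yS y1 big1 ?addn0 => [|z' _]; last by rewrite y0 muln0.
  by rewrite big_ord_recr big_ord1 /= bin0 mul1n bin0n mul0n addn0.
rewrite yS IHm // (sum_diag_binomS m (fun q => walk_sum G q x z)); congr (_ + _).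
under eq_bigr do rewrite IHm // big_distrr.
rewrite exchange_big; apply: eq_bigr => q _ /=.
by rewrite big_distrr; apply: eq_bigr => z' _; rewrite mulnCA.
Qed.

End DiagonalBinomialRecurrence.

End WalkSums.

Lemma prod_nat_forall (I : finType) (P : pred I) :
  \prod_(i : I) (P i : nat) = [forall i, P i].
Proof.
case: (boolP [forall i, P i]) => [/forallP allP | /forallPn [i /negbTE Pi_false]].
  by rewrite big1 // => i _; rewrite allP.
by rewrite (bigD1 i) //= Pi_false.
Qed.

Section ThresholdWalks.
Variables (n : nat) (a : 'I_n -> bool).

Definition type1n (u : 'I_n) : nat := type1 a u.
Definition lstep (u v : 'I_n) : nat := (v == u) || tadj a u v.
Definition nstep (u v : 'I_n) : nat :=
  ((v == u) || tadj a u v) && ~~ (type1 a u && type1 a v).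

(* [LWirr j] counts the lazy walks of length j between type-1 vertices that take no
   step (lazy or not) from a type-1 vertex to a type-1 vertex; cutting a lazy walk at
   its last such step gives [LW_renewal]. *)
Definition LWirr (j : nat) : nat := \sum_u type1n u * walk_sum nstep j type1n u.

(* The b-value of a type-0 vertex, extended by 0 to type-1 vertices so that sums over
   the type-0 vertices may range over all vertices. *)
Definition bval (z : 'I_n) : nat :=
  (~~ type1 a z) * \sum_v (type1 a v && (val z < val v)).
Definition bmin (u v : 'I_n) : nat := minn (bval u) (bval v).

Lemma LW_walk_sum L : LW a L.+1 = \sum_u type1n u * walk_sum lstep L type1n u.
Proof.
rewrite /LW cardsE -sum1_card big_mkcond /= -walk_sumE; apply: eq_bigr => w _.
rewrite /lstep prod_nat_forall unfold_in.
by rewrite /type1n /lazy_walk; case: [forall i, _]; case: (type1 a _); case: (type1 a _).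
Qed.

Lemma tadj_sym u v : tadj a u v = tadj a v u.
Proof.
rewrite /tadj eq_sym; case: ltngtP => // /val_inj ->.
by rewrite eqxx.
Qed.

Lemma tadj_type1 u v : type1 a u -> type1 a v -> u != v -> tadj a u v.
Proof.
rewrite /type1 /tadj => t1u t1v neq_uv; rewrite neq_uv.
case: ltngtP => [lt_uv | lt_vu | /val_inj eq_uv]; last by rewrite eq_uv eqxx in neq_uv.
  by case/orP: t1v => [/eqP v0|//]; rewrite v0 in lt_uv.
by case/orP: t1u => [/eqP u0|//]; rewrite u0 in lt_vu.
Qed.

Lemma lstep_split u v : lstep u v = nstep u v + type1n u * type1n v.
Proof.
rewrite /lstep /nstep /type1n.
case: (boolP (type1 a u)) => [t1u|] /=; last by rewrite andbT addn0.
case: (boolP (type1 a v)) => [t1v|] /=; last by rewrite andbT addn0.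
by case: eqVneq => [//|/eqP neq_vu]; rewrite tadj_type1 // eq_sym; apply/eqP.
Qed.

Lemma LW_renewal L : LW a L.+1 = \sum_(r < L.+1) LW a r * LWirr (L - r).
Proof.
rewrite big_ord_recl mul1n subn0 LW_walk_sum /LWirr.
under eq_bigr do rewrite (walk_sum_rank1 lstep_split) mulnDr.
rewrite big_split; congr (_ + _).
under eq_bigr do rewrite big_distrr.
rewrite exchange_big; apply: eq_bigr => i _.
rewrite lift0 LW_walk_sum big_distrr; apply: eq_bigr => u _.
by rewrite /= mulnCA.
Qed.

Lemma tadj_type0 z w : ~~ type1 a z -> ~~ type1 a w -> tadj a z w = false.
Proof.
rewrite /type1 /tadj !negb_or => /andP[_ /negbTE az] /andP[_ /negbTE aw].
by case: ifP; rewrite ?az ?aw andbF.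
Qed.

Lemma tadj_type01 z w : ~~ type1 a z -> type1 a w -> tadj a z w = (val z < val w).
Proof.
move=> t0z t1w; have neq_zw : z != w by apply: contraNneq t0z => ->.
move: t0z t1w; rewrite /type1 /tadj neq_zw negb_or => /andP[z0 /negbTE az] /orP t1w.
case: ltngtP => [lt_zw | _ | _]; rewrite ?az //.
by case: t1w => // /eqP w0; rewrite w0 in lt_zw.
Qed.

Lemma nstep_type1 u v : type1 a u -> nstep u v = ~~ type1 a v && (val v < val u).
Proof.
rewrite /nstep => t1u; rewrite t1u /=.
case: (boolP (type1 a v)) => t0v; rewrite ?andbF //.
have neq_vu : v == u = false by apply: contraNF t0v => /eqP ->.
by rewrite neq_vu tadj_sym tadj_type01 ?andbT.
Qed.

Lemma nstep_type0 z v : ~~ type1 a z ->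
  nstep z v = (v == z) + (type1 a v && (val z < val v)).
Proof.
rewrite /nstep => t0z; rewrite (negbTE t0z) andbT.
case: eqVneq => [->|neq_vz] /=; first by rewrite (negbTE t0z).
case: (boolP (type1 a v)) => [t1v|t0v]; first by rewrite tadj_type01.
by rewrite tadj_type0.
Qed.

Lemma LWirr0 : LWirr 0 = thr_c a.
Proof.
rewrite /LWirr /thr_c -sum1dep_card [RHS]big_mkcond; apply: eq_bigr => u _.
by rewrite /type1n /=; case: (type1 a u).
Qed.

Lemma LWirr1 : LWirr 1 = 0.
Proof.
apply/eqP; rewrite sum_nat_eq0; apply/forallP => u /=.
rewrite /type1n; case: (boolP (type1 a u)) => //= t1u.
rewrite mul1n sum_nat_eq0; apply/forallP => v.
by rewrite nstep_type1 //; case: (type1 a v); rewrite /= ?muln0.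
Qed.

Lemma bval_type0 z : ~~ type1 a z -> bval z = \sum_v (type1 a v && (val z < val v)).
Proof. by rewrite /bval => ->; rewrite mul1n. Qed.

Lemma bval_type1 z : type1 a z -> bval z = 0.
Proof. by rewrite /bval => ->. Qed.

Lemma bmin_type1 u v : type1 a v -> bmin u v = 0.
Proof. by move=> t1v; rewrite /bmin (bval_type1 t1v) minn0. Qed.

(* The type-1 neighbours of a type-0 vertex are the type-1 vertices after it, so the
   neighbourhoods of two type-0 vertices are nested. *)
Lemma bmin_common_type1 z z' : ~~ type1 a z -> ~~ type1 a z' ->
  \sum_v (type1 a v && (val z < val v) && (val z' < val v)) = bmin z z'.
Proof.
wlog le_zz' : z z' / val z <= val z' => [sym t0z t0z'|t0z t0z'].
  case: (leqP (val z) (val z')) => [le_zz'|/ltnW le_z'z]; first exact: sym.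
  rewrite [bmin _ _]minnC -[minn _ _]/(bmin z' z) -sym //.
  by apply: eq_bigr => v _; rewrite andbAC.
have later v :
    type1 a v && (val z < val v) && (val z' < val v) = type1 a v && (val z' < val v).
  case: (ltnP (val z') (val v)) => [lt_z'v|_]; last by rewrite !andbF.
  by rewrite (leq_ltn_trans le_zz' lt_z'v) !andbT.
rewrite /bmin !bval_type0 //; under eq_bigr do rewrite later.
apply/esym/minn_idPr/leq_sum => v _; rewrite -later.
by case: (type1 a v && _); case: (_ < _).
Qed.

Lemma walk_sum_nstep_type1 m h u : type1 a u ->
  walk_sum nstep m.+1 h u =
  \sum_v (~~ type1 a v && (val v < val u)) * walk_sum nstep m h v.
Proof. by move=> t1u /=; under eq_bigr do rewrite nstep_type1 //. Qed.

Lemma walk_sum_nstep_type0 m h z : ~~ type1 a z ->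
  walk_sum nstep m.+1 h z =
  walk_sum nstep m h z + \sum_v (type1 a v && (val z < val v)) * walk_sum nstep m h v.
Proof.
move=> t0z /=; under eq_bigr do rewrite nstep_type0 // mulnDl.
by rewrite big_split (bigD1 z) //= eqxx mul1n big1 ?addn0 // => v /negbTE ->.
Qed.

Definition type0_walks (m : nat) (z : 'I_n) : nat :=
  (~~ type1 a z) * walk_sum nstep m type1n z.

Lemma type0_walks0 z : type0_walks 0 z = 0.
Proof. by rewrite /type0_walks /= /type1n; case: (type1 a z). Qed.

Lemma type0_walks1 z : type0_walks 1 z = bval z.
Proof.
rewrite /type0_walks /bval; case: (boolP (type1 a z)) => // t0z.
rewrite !mul1n walk_sum_nstep_type0 //= /type1n (negbTE t0z) add0n.
by apply: eq_bigr => v _; case: (type1 a v); rewrite /= ?muln1.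
Qed.

Lemma type0_walksSS m z :
  type0_walks m.+2 z = type0_walks m.+1 z + \sum_z' bmin z z' * type0_walks m z'.
Proof.
rewrite /type0_walks; case: (boolP (type1 a z)) => [t1z|t0z].
  by rewrite big1 // => z' _; rewrite /bmin (bval_type1 t1z) min0n.
rewrite !mul1n walk_sum_nstep_type0 //; congr (_ + _).
transitivity (\sum_v (type1 a v && (val z < val v)) *
  \sum_z' (~~ type1 a z' && (val z' < val v)) * walk_sum nstep m type1n z').
  apply: eq_bigr => v _; case: (boolP (type1 a v)) => [t1v|_]; last by rewrite !mul0n.
  by rewrite walk_sum_nstep_type1.
under eq_bigr do rewrite big_distrr.
rewrite exchange_big; apply: eq_bigr => z' _ /=.
case: (boolP (type1 a z')) => [t1z'|t0z'].
  by rewrite bmin_type1 // big1 // => v _; rewrite /= mul0n muln0.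
rewrite -bmin_common_type1 // big_distrl; apply: eq_bigr => v _ /=.
by case: (type1 a v && _); case: (_ < _); rewrite /= ?mul0n ?mul1n.
Qed.

Lemma type0_walks_closed m z :
  type0_walks m.+1 z = \sum_(q < m.+1) 'C(m - q, q) * walk_sum bmin q bval z.
Proof. exact: diag_binom_solution type0_walks0 type0_walks1 type0_walksSS m z. Qed.

Lemma LWirrS m : LWirr m.+1 = \sum_v bval v * walk_sum nstep m type1n v.
Proof.
transitivity (\sum_u type1n u *
  \sum_v (~~ type1 a v && (val v < val u)) * walk_sum nstep m type1n v).
  apply: eq_bigr => u _; case: (boolP (type1 a u)) => [t1u|t0u].
    by rewrite walk_sum_nstep_type1.
  by rewrite /type1n (negbTE t0u) !mul0n.
under eq_bigr do rewrite big_distrr.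
rewrite exchange_big; apply: eq_bigr => v _ /=.
case: (boolP (type1 a v)) => [t1v|t0v].
  by rewrite bval_type1 // big1 // => u _; rewrite /= mul0n muln0.
rewrite bval_type0 // big_distrl; apply: eq_bigr => u _ /=.
by rewrite /type1n; case: (type1 a u); case: (_ < _); rewrite /= ?mul0n ?mul1n.
Qed.

Definition type0_seq : seq 'I_n := [seq i <- enum 'I_n | ~~ type1 a i].

(* [Defs.bseq] is qualified: the [bseq] of tuple.v shadows it. *)
Lemma bseq_bval : Defs.bseq a = map bval type0_seq.
Proof.
apply/eq_in_map => i; rewrite mem_filter => /andP[t0i _].
rewrite bval_type0 // -sum1dep_card big_mkcond; apply: eq_bigr => j _.
by case: (_ && _).
Qed.

Lemma size_type0_seq : size type0_seq = thr_z a.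
Proof. by rewrite /thr_z bseq_bval size_map. Qed.

Section Type0Enumeration.
Variable x0 : 'I_n.

Definition bnth (t : 'I_(thr_z a)) : nat := nth 0 (Defs.bseq a) t.

Lemma bnthE t : bnth t = bval (nth x0 type0_seq t).
Proof. by rewrite /bnth bseq_bval (nth_map x0) // size_type0_seq. Qed.

Lemma sum_type0_seq (phi : 'I_n -> nat) : (forall v, type1 a v -> phi v = 0) ->
  \sum_(t < thr_z a) phi (nth x0 type0_seq t) = \sum_v phi v.
Proof.
move=> phi_type1; rewrite -size_type0_seq.
rewrite -(big_mkord xpredT (fun t => phi (nth x0 type0_seq t))).
rewrite -(big_nth x0 xpredT phi) big_filter big_enum_cond /= big_mkcond /=.
by apply: eq_bigr => v _; case: (boolP (type1 a v)) => [/phi_type1 ->|].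
Qed.

Lemma walk_sum_bnth q t :
  walk_sum (fun t1 t2 => minn (bnth t1) (bnth t2)) q bnth t
  = walk_sum bmin q bval (nth x0 type0_seq t).
Proof.
elim: q t => [|q IHq] t /=; first exact: bnthE.
under eq_bigr do rewrite IHq !bnthE.
by apply: sum_type0_seq => v t1v; rewrite bmin_type1.
Qed.

Lemma thr_F_walk_sum q : thr_F a q.+1 = \sum_v bval v * walk_sum bmin q bval v.
Proof.
have /= -> := walk_sumE (fun t1 t2 => minn (bnth t1) (bnth t2)) bnth bnth q.
under eq_bigr do rewrite walk_sum_bnth bnthE.
by apply: sum_type0_seq => v t1v; rewrite bval_type1.
Qed.

Lemma LWirrSS m : LWirr m.+2 = \sum_(q < m.+1) 'C(m - q, q) * thr_F a q.+1.
Proof.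
rewrite LWirrS.
transitivity (\sum_v bval v * type0_walks m.+1 v).
  apply: eq_bigr => v _; rewrite /type0_walks.
  by case: (boolP (type1 a v)) => [/bval_type1 ->|]; rewrite ?mul1n.
under eq_bigr do rewrite type0_walks_closed big_distrr.
rewrite exchange_big; apply: eq_bigr => q _.
by rewrite thr_F_walk_sum big_distrr; apply: eq_bigr => v _; rewrite /= mulnCA.
Qed.

End Type0Enumeration.

End ThresholdWalks.

Theorem proposition3p5 (n : nat) (a : 'I_n -> bool) :
  (4 <= n)%N ->
  tconnected a ->
  (n - 1 < thr_size a)%N ->
  (thr_size a < 'C(n, 2))%N ->
  LW a 0 = 1 /\
  forall k : nat, (0 < k)%N ->
    LW a k = (thr_c a * LW a (k - 1) +
      \sum_(r < k - 2) LW a r *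
        \sum_(q < k) 'C(k - 3 - r - q, q) * thr_F a q.+1)%N.
Proof.
(* Connectivity and the bounds on the size are not needed; n >= 4 only provides a
   default vertex. *)
move=> n_ge4 _ _ _; split=> // -[//|L] _.
have x0 : 'I_n := Ordinal (leq_trans (isT : 0 < 4) n_ge4).
rewrite LW_renewal subn1 succnK big_ord_recr subnn LWirr0 addnC mulnC.
congr (_ + _); case: L => [|m]; first by rewrite !big_ord0.
rewrite big_ord_recr [LHS]/= subSnn LWirr1 muln0 addn0 (_ : m.+2 - 2 = m); last by lia.
apply: eq_bigr => r _; have lt_rm := ltn_ord r.
rewrite (_ : m.+1 - r = (m - r.+1).+2) ?(LWirrSS a x0); last by lia.
rewrite (_ : m.+2 - 3 - r = m - r.+1); last by lia.
by rewrite (@sum_diag_binom_widen (fun q => thr_F a q.+1) _ m.+2) //; lia.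
Qed.
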